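(* Let $f(1),f(2),\dots$ be a non-negative, non-decreasing sequence of real numbers with $f(1)=0$, and define $a(n):=n\sum_{i=1}^{n} f(i)/i^2$ for $n\ge1$. Then $a(n)\ge 0$ for all $n\ge1$, and for every $n\ge 2$, $$a(n)\le \frac{a(n-1)+a(n+1)}{2}.$$ *)

From Stdlib Require Import Reals.
Open Scope R_scope.

(* a(n) := n * sum_{i=1}^{n} f(i)/i^2, for n >= 1.
   Written as n * sum_{k=0}^{n-1} f(k+1)/(k+1)^2 using sum_f_R0
   (which sums indices 0..n-1 inclusive, i.e. n terms). *)
Definition a_seq (f : nat -> R) (n : nat) : R :=
  INR n * sum_f_R0 (fun k => f (S k) / (INR (S k)) ^ 2) (Nat.pred n).

(** Writing [t i = f i / i^2] and [S n = t 1 + ... + t n], so that [a n = n S n],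
    the second difference telescopes to
    [a (n-1) + a (n+1) - 2 a n = (n+1) t (n+1) - (n-1) t n = f (n+1) / (n+1) - (n-1) f n / n^2],
    which is nonnegative because [f n <= f (n+1)] and [(n-1)(n+1) <= n^2]. *)

From Stdlib Require Import Reals Lra Lia.
Open Scope R_scope.

Lemma a_seq_nonneg (f : nat -> R) (n : nat) :
  (forall i : nat, (1 <= i)%nat -> 0 <= f i) -> 0 <= a_seq f n.
Proof.
  intros hnonneg. unfold a_seq.
  apply Rmult_le_pos; [apply pos_INR|].
  apply cond_pos_sum; intros k.
  apply Rmult_le_pos.
  - apply hnonneg; lia.
  - left. apply Rinv_0_lt_compat, pow_lt, lt_0_INR; lia.
Qed.

Lemma a_seq_second_difference (f : nat -> R) (n : nat) :
  a_seq f (S n) + a_seq f (S (S (S n))) - 2 * a_seq f (S (S n)) =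
  f (S (S (S n))) / INR (S (S (S n)))
  - INR (S n) * f (S (S n)) / INR (S (S n)) ^ 2.
Proof.
  unfold a_seq; simpl Nat.pred.
  rewrite !tech5.
  set (s := sum_f_R0 _ n).
  rewrite !S_INR.
  assert (hn := pos_INR n).
  field; lra.
Qed.

Lemma mul_div_sqr_succ_le (x a : R) :
  0 <= x -> 0 <= a -> x * a / (x + 1) ^ 2 <= a / (x + 2).
Proof.
  intros hx ha.
  assert (gap : a / (x + 2) - x * a / (x + 1) ^ 2 = a / ((x + 2) * (x + 1) ^ 2))
    by (field; lra).
  assert (0 <= a / ((x + 2) * (x + 1) ^ 2)).
  { apply Rmult_le_pos; [exact ha|].
    left; apply Rinv_0_lt_compat; nra. }
  lra.
Qed.

Theorem claim6p2 (f : nat -> R)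
  (hnonneg : forall i : nat, (1 <= i)%nat -> 0 <= f i)
  (hmono : forall i j : nat, (1 <= i)%nat -> (i <= j)%nat -> f i <= f j)
  (h1 : f 1%nat = 0) :
  (forall n : nat, (1 <= n)%nat -> 0 <= a_seq f n) /\
  (forall n : nat, (2 <= n)%nat ->
     a_seq f n <= (a_seq f (n - 1) + a_seq f (n + 1)) / 2).
Proof.
  split; [intros n _; exact (a_seq_nonneg f n hnonneg)|].
  intros n hn; destruct n as [|[|m]]; try lia.
  replace (S (S m) - 1)%nat with (S m) by lia.
  replace (S (S m) + 1)%nat with (S (S (S m))) by lia.
  assert (hdiff := a_seq_second_difference f m).
  assert (hfm : 0 <= f (S (S m))) by (apply hnonneg; lia).
  assert (hle : f (S (S m)) <= f (S (S (S m)))) by (apply hmono; lia).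
  assert (hratio := mul_div_sqr_succ_le (INR (S m)) (f (S (S m))) (pos_INR _) hfm).
  assert (e2 : INR (S (S m)) = INR (S m) + 1) by apply S_INR.
  assert (e3 : INR (S (S (S m))) = INR (S m) + 2) by (rewrite !S_INR; ring).
  rewrite e2, e3 in hdiff.
  assert (hmono_div : f (S (S m)) / (INR (S m) + 2) <= f (S (S (S m))) / (INR (S m) + 2)).
  { apply Rmult_le_compat_r; [|exact hle].
    left; apply Rinv_0_lt_compat; assert (hp := pos_INR (S m)); lra. }
  lra.
Qed.
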